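(* Let $\mathbf{d}=(d_0,d_1,d_2,\ldots)$ be the period-doubling sequence. For every positive integer $k$, the $t$-Hankel determinant $H_k(\mathbf{d},t)$ is a polynomial in $t$ of degree $k$ whose leading coefficient is the only one of its coefficients that is an odd integer. In other words, $$H_k(\mathbf{d},t)\equiv t^k \pmod 2.$$
   Context: The Thue--Morse sequence $\mathbf{e}=(e_0,e_1,\ldots)$ is defined by $\sum_{k\ge0}e_kx^k=\prod_{k\ge0}(1-x^{2^k})$. The period-doubling sequence $\mathbf{d}$ is defined by $d_k=\frac12|e_k-e_{k+1}|$ for $k\ge0$, so $\mathbf{d}=(1,0,1,1,1,0,\ldots)$. For a sequence $\mathbf{c}=(c_0,c_1,\ldots)$, a parameter $t$ and $k\ge1$, the $t$-Hankel determinant is $H_k(\mathbf{c},t)=\det(a_{ij})_{0\le i,j\le k-1}$ where $a_{ij}=c_{i+j}$ for $i\ne j$ and $a_{ii}=c_{2i}\,t$ (i.e. the ordinary Hankel determinant with every diagonal entry multiplied by $t$). A congruence of polynomials modulo $2$ means coefficientwise congruence. *)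

From mathcomp Require Import all_boot all_order all_algebra.
Set Implicit Arguments. Unset Strict Implicit. Unset Printing Implicit Defensive.
Import GRing.Theory Num.Theory.
Local Open Scope ring_scope.

(* Thue--Morse: e_k = coefficient of x^k in prod_{j>=0} (1 - x^(2^j)).
   Factors with 2^j > k do not affect the coefficient of x^k, so it suffices
   to take the finite product over j < k.+1. *)
Definition tm (k : nat) : int :=
  (\prod_(j < k.+1) (1 - 'X^(2 ^ j) : {poly int}))`_k.

Definition pd (k : nat) : int := ((`|tm k - tm k.+1|)%R %/ 2)%Z.

Definition tHankel_mx (c : nat -> int) (k : nat) : 'M[{poly int}]_k :=
  \matrix_(i < k, j < k)
    (if i == j then (c (i + j)%N)%:P * 'X else (c (i + j)%N)%:P).

Definition tHankel (c : nat -> int) (k : nat) : {poly int} :=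
  \det (tHankel_mx c k).

Definition poly_congr (m : int) (p q : {poly int}) : Prop :=
  forall i : nat, (m %| (p - q)`_i)%Z.

(* Modulo 2 the recursion d_{2i} = 1, d_{2i+1} = 1 - d_i makes the Hankel
   matrix H of d of size 2^m an involution, by splitting every sum over
   even and odd indices.  As d_{2i} = 1, the t-Hankel matrix is
   Q = (t + 1) I + H, hence Q^2 = t^2 I and det Q = t^(2^m) because squaring
   is injective in characteristic 2.  For 2^m < k < 2^(m+1), write
   Q_(2^(m+1)) as a block matrix with Q_k in the top-left corner; Q^2 = t^2 I
   relates det Q_k to the determinant of the bottom-right block, which is
   Q_(2^(m+1)-k) up to reversing rows and columns, because d is a palindrome
   on [0, 2^(m+1) - 2].
   The degree of H_k(d, t) is k since it is the characteristic polynomial of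
   the off-diagonal part of -H. *)

From mathcomp Require Import all_boot all_algebra all_fingroup.
From mathcomp Require Import zify ring.
Set Implicit Arguments. Unset Strict Implicit. Unset Printing Implicit Defensive.
Import GRing.Theory.
Local Open Scope ring_scope.

Definition tm_poly (n : nat) : {poly int} := \prod_(j < n) (1 - 'X^(2 ^ j)).

Lemma tmE k : tm k = (tm_poly k.+1)`_k. Proof. by []. Qed.

Lemma coef_tm_poly_stable n n' k :
  (k < 2 ^ n)%N -> (n <= n')%N -> (tm_poly n')`_k = (tm_poly n)`_k.
Proof.
move=> lt_k; elim: n' => [|n' IH]; first by rewrite leqn0 => /eqP ->.
rewrite leq_eqVlt => /orP[/eqP -> // | lt_n].
rewrite /tm_poly big_ord_recr /= mulrBr mulr1 coefB coefMXn -/(tm_poly n').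
rewrite IH // ifT ?subr0 //; apply: (leq_trans lt_k); rewrite leq_exp2l //.
Qed.

Lemma tm_polyS n : tm_poly n.+1 = (1 - 'X) * (tm_poly n \Po 'X^2).
Proof.
rewrite /tm_poly big_ord_recl /= expn0 expr1; congr (_ * _).
elim: n => [|n IH]; first by rewrite !big_ord0 comp_polyC.
rewrite big_ord_recr /= IH [in RHS]big_ord_recr /= comp_polyM; congr (_ * _).
by rewrite comp_polyB comp_polyC comp_Xn_poly -exprM expnS.
Qed.

Lemma coef_tm_polyS n i : (tm_poly n.+1)`_i =
  (if (2 %| i)%N then (tm_poly n)`_(i %/ 2) else 0) -
  (if i is i'.+1 then (if (2 %| i')%N then (tm_poly n)`_(i' %/ 2) else 0) else 0).
Proof.
rewrite tm_polyS mulrBl mul1r coefB coef_comp_poly_Xn // coefXM.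
by case: i => [|i] //=; rewrite coef_comp_poly_Xn.
Qed.

Lemma odd_double_dvdn i : (2 %| (2 * i).+1)%N = false.
Proof. by rewrite -[(2 * i).+1]addn1 dvdn_addr ?dvdn_mulr. Qed.

Lemma tm_even i : tm (2 * i) = tm i.
Proof.
case: i => [|i]; first by rewrite tmE /tm_poly big_ord1 coefB coef1 coefXn.
rewrite !tmE coef_tm_polyS dvdn_mulr // mulKn //.
have -> : (2 * i.+1 = (2 * i).+2)%N by lia.
rewrite odd_double_dvdn subr0; apply: coef_tm_poly_stable; last by lia.
by apply: (leq_trans (ltn_expl _ (isT : (1 < 2)%N))); rewrite leq_exp2l //; lia.
Qed.

Lemma tm_odd i : tm (2 * i).+1 = - tm i.
Proof.
rewrite !tmE coef_tm_polyS odd_double_dvdn dvdn_mulr // mulKn // sub0r; congr (- _).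
apply: coef_tm_poly_stable; last by lia.
by apply: (leq_trans (ltn_expl _ (isT : (1 < 2)%N))); rewrite leq_exp2l //; lia.
Qed.

Lemma nat_even_or_odd k : exists i, k = (2 * i)%N \/ k = (2 * i).+1.
Proof.
exists k./2; rewrite -{1 3}(odd_double_half k) -muln2 mulnC.
by case: (odd k); [right | left].
Qed.

Lemma tm_pm1 k : tm k = 1 \/ tm k = -1.
Proof.
elim/ltn_ind: k => k IH; have [i [ek|ek]] := nat_even_or_odd k; subst k.
  case: i IH => [|i] IH; first by left; rewrite tmE /tm_poly big_ord1 coefB coef1 coefXn.
  by rewrite tm_even; apply: IH; lia.
by rewrite tm_odd; have [->|->] := IH i ltac:(lia); [right | left].
Qed.

Lemma pd_even i : pd (2 * i) = 1.
Proof. by rewrite /pd tm_even tm_odd; have [->|->] := tm_pm1 i. Qed.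

Lemma pd_odd i : pd (2 * i).+1 = 1 - pd i.
Proof.
rewrite /pd tm_odd (_ : (2 * i).+2 = 2 * i.+1)%N ?tm_even; last by lia.
by have [->|->] := tm_pm1 i; have [->|->] := tm_pm1 i.+1.
Qed.

Fact pchar_F2 : 2 \in [pchar 'F_2]. Proof. exact: pchar_Fp. Qed.

Fact pchar_polyF2 : 2 \in [pchar {poly 'F_2}]. Proof. by rewrite pchar_poly pchar_F2. Qed.

Definition pd2 (n : nat) : 'F_2 := (pd n)%:~R.

Lemma pd2_even i : pd2 (2 * i) = 1.
Proof. by rewrite /pd2 pd_even. Qed.

Lemma pd2_odd i : pd2 (2 * i).+1 = 1 + pd2 i.
Proof. by rewrite /pd2 pd_odd intrB (oppr_pchar2 pchar_F2). Qed.

Lemma pd2_add_double i l :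
  pd2 (i + 2 * l) = if odd i then 1 + pd2 (i./2 + l) else 1.
Proof.
have := odd_double_half i; rewrite -muln2; case: (odd i) => /= hi.
  by rewrite (_ : i + 2 * l = (2 * (i./2 + l)).+1)%N ?pd2_odd //; lia.
by rewrite (_ : i + 2 * l = 2 * (i./2 + l))%N ?pd2_even //; lia.
Qed.

Lemma pd2_add_doubleS i l :
  pd2 (i + (2 * l).+1) = if odd i then 1 else 1 + pd2 (i./2 + l).
Proof.
have := odd_double_half i; rewrite -muln2; case: (odd i) => /= hi.
  by rewrite (_ : i + (2 * l).+1 = 2 * (i./2 + l).+1)%N ?pd2_even //; lia.
by rewrite (_ : i + (2 * l).+1 = (2 * (i./2 + l)).+1)%N ?pd2_odd //; lia.
Qed.

Lemma pd2_pair i j l :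
  pd2 (i + 2 * l) * pd2 (2 * l + j) + pd2 (i + (2 * l).+1) * pd2 ((2 * l).+1 + j) =
  (odd i == odd j)%:R * (pd2 (i./2 + l) * pd2 (l + j./2))
    + (pd2 (i./2 + l) + pd2 (l + j./2)).
Proof.
rewrite [(2 * l + j)%N]addnC [((2 * l).+1 + j)%N]addnC [(l + j./2)%N]addnC.
rewrite !pd2_add_double !pd2_add_doubleS.
(* In each parity case the two sides differ by 1 + 1 = 0. *)
case: (odd i); case: (odd j) => /=;
  by rewrite ?mul0r ?add0r -[RHS]addr0 -(addrr_pchar2 pchar_F2 1); ring.
Qed.

Lemma pd2_shift m a : (a.+1 < 2 ^ m)%N -> pd2 (a + 2 ^ m) = pd2 a.
Proof.
elim: m a => [|m IH] a; first by rewrite expn0.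
rewrite expnS => lt_a; have [b [ea|ea]] := nat_even_or_odd a; subst a.
  by rewrite -[(_ + _)%N]mulnDr !pd2_even.
by rewrite addSn -[(_ + _)%N]mulnDr !pd2_odd IH //; lia.
Qed.

Lemma pd2_palindrome p n n' : (n + n' + 2 = 2 ^ p.+1)%N -> pd2 n = pd2 n'.
Proof.
elim: p n n' => [|p IH] n n'.
  by rewrite expn1 => h; have [-> ->] : n = 0%N /\ n' = 0%N by lia.
rewrite expnS => h.
have [a [en|en]] := nat_even_or_odd n; have [b [en'|en']] := nat_even_or_odd n';
  subst n n'; try lia.
- by rewrite !pd2_even.
- by rewrite !pd2_odd (IH a b) //; lia.
Qed.

Lemma sum_nat_even_odd (V : nmodType) n (F : nat -> V) :
  \sum_(0 <= l < 2 * n) F l = \sum_(0 <= l < n) (F (2 * l)%N + F (2 * l).+1).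
Proof.
elim: n => [|n IH]; first by rewrite muln0 !big_geq.
by rewrite mulnS add2n !big_nat_recr //= IH addrA.
Qed.

Lemma pd2_window_sum m a : (a < 2 ^ m)%N ->
  \sum_(0 <= l < 2 ^ m) pd2 (a + l) = \sum_(0 <= l < 2 ^ m) pd2 l.
Proof.
elim: a => [//|a IH] lt_a; rewrite -IH; last by lia.
have [K eK] : exists K, (2 ^ m = K.+1)%N by exists (2 ^ m).-1; rewrite prednK ?expn_gt0.
move: lt_a; rewrite eK => lt_a.
rewrite [in RHS]big_nat_recl // [in LHS]big_nat_recr //= addn0 addrC.
congr (_ + _).
  by rewrite addSnnS -eK pd2_shift //; lia.
by apply: eq_big_nat => l _; rewrite addSnnS.
Qed.

Lemma eqn_odd_half i j : (odd i == odd j) && (i./2 == j./2) = (i == j).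
Proof.
apply/andP/eqP => [[/eqP odd_ij /eqP half_ij] | ->]; last by rewrite !eqxx.
by rewrite -(odd_double_half i) odd_ij half_ij odd_double_half.
Qed.

Lemma pd2_hankel_orthogonal m i j : (i < 2 ^ m)%N -> (j < 2 ^ m)%N ->
  \sum_(0 <= l < 2 ^ m) pd2 (i + l) * pd2 (l + j) = (i == j)%:R.
Proof.
elim: m i j => [|m IH] i j.
  rewrite expn0 !ltnS !leqn0 => /eqP-> /eqP->.
  by rewrite big_nat1 (pd2_even 0) mulr1.
rewrite expnS => lt_i lt_j; rewrite sum_nat_even_odd.
under eq_big_nat => l _ do rewrite pd2_pair.
rewrite big_split /= -mulr_sumr big_split /= IH; try lia.
under [X in _ + (_ + X)]eq_big_nat => l _ do rewrite addnC.
rewrite !pd2_window_sum; try lia.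
by rewrite addrr_pchar2 ?pchar_F2 // addr0 -natrM mulnb eqn_odd_half.
Qed.

Lemma expr2_inj_pchar2 (R : idomainType) : 2 \in [pchar R] ->
  forall x y : R, x ^+ 2 = y ^+ 2 -> x = y.
Proof.
move=> pcharR2 x y xy; apply/eqP; rewrite -subr_eq0.
have : (x - y) ^+ 2 = 0.
  rewrite -(pFrobenius_autE pcharR2) pFrobenius_autB_comm; last exact: mulrC.
  by rewrite !pFrobenius_autE xy subrr.
by move/eqP; rewrite expf_eq0.
Qed.

Lemma det_mul_drsubmx (R : comNzRingType) k r (Q : 'M[R]_(k + r)) a :
  Q *m Q = a%:M -> \det Q * \det (drsubmx Q) = \det (ulsubmx Q) * a ^+ r.
Proof.
(* Q * [[1, B], [0, D]] = [[A, 0], [C, a]] for Q = [[A, B], [C, D]]. *)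
rewrite -{1 2 3}[Q]submxK mulmx_block (scalar_mx_block k r) => /eq_block_mx[_ QB _ QD].
have := congr1 determinant (mulmx_block (ulsubmx Q) (ursubmx Q) (dlsubmx Q) (drsubmx Q)
  1%:M (ursubmx Q) 0 (drsubmx Q)).
rewrite submxK det_mulmx det_ublock det1 mul1r => ->.
by rewrite QB QD !mulmx1 !mulmx0 !addr0 det_lblock det_scalar.
Qed.

Definition hankel_pd2 n : 'M['F_2]_n := \matrix_(i, j) pd2 (i + j).

Definition thankel_pd2 n : 'M[{poly 'F_2}]_n :=
  \matrix_(i, j) if i == j then 'X else (pd2 (i + j))%:P.

Lemma hankel_pd2_sqr m : hankel_pd2 (2 ^ m) *m hankel_pd2 (2 ^ m) = 1%:M.
Proof.
apply/matrixP => i j; rewrite !mxE; under eq_bigr do rewrite !mxE.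
by rewrite -(big_mkord xpredT (fun l => pd2 (i + l) * pd2 (l + j))) pd2_hankel_orthogonal.
Qed.

Lemma thankel_pd2E n : thankel_pd2 n = ('X + 1)%:M + map_mx polyC (hankel_pd2 n).
Proof.
apply/matrixP => i j; rewrite !mxE; case: eqP => [->|_]; last by rewrite add0r.
by rewrite addnn -mul2n pd2_even -addrA -polyCD addrr_pchar2 ?pchar_F2 // addr0.
Qed.

Lemma thankel_pd2_sqr n m : n = (2 ^ m)%N -> thankel_pd2 n *m thankel_pd2 n = ('X ^+ 2)%:M.
Proof.
move=> ->; rewrite thankel_pd2E mulmxDl !mulmxDr !mul_scalar_mx mul_mx_scalar.
rewrite -map_mxM hankel_pd2_sqr map_mx1 scale_scalar_mx [(_ *: _ + 1%:M)]addrC.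
rewrite addrACA -scalerDl addrr_pchar2 ?pchar_polyF2 // scale0r addr0 -raddfD /=; congr (_%:M).
rewrite -[RHS]addr0 -(addrr_pchar2 pchar_polyF2 ('X + 1)); ring.
Qed.

Lemma det_thankel_pd2_pow2 n m : n = (2 ^ m)%N -> \det (thankel_pd2 n) = 'X ^+ n.
Proof.
move=> en; apply: (expr2_inj_pchar2 pchar_polyF2).
by rewrite expr2 -det_mulmx (thankel_pd2_sqr en) det_scalar -!exprM mulnC.
Qed.

Lemma ulsubmx_thankel_pd2 k r : ulsubmx (thankel_pd2 (k + r)) = thankel_pd2 k.
Proof. by apply/matrixP => i j; rewrite !mxE (inj_eq (@lshift_inj _ _)). Qed.

Lemma det_drsubmx_thankel_pd2 k r p : (k + r = 2 ^ p)%N ->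
  \det (drsubmx (thankel_pd2 (k + r))) = \det (thankel_pd2 r).
Proof.
move=> ekr; pose s : 'S_r := perm (@rev_ord_inj r).
have -> : drsubmx (thankel_pd2 (k + r)) = row_perm s (col_perm s (thankel_pd2 r)).
  apply/matrixP => i j; rewrite !mxE !permE /=.
  rewrite (inj_eq (@rshift_inj _ _)) (inj_eq rev_ord_inj); case: eqP => // _.
  congr (_%:P); apply: (@pd2_palindrome p); rewrite expnS -ekr /=.
  by have := ltn_ord i; have := ltn_ord j; lia.
rewrite row_permE col_permE !det_mulmx !det_perm.
by rewrite !(oppr_pchar2 pchar_polyF2) !expr1n mul1r mulr1.
Qed.

Lemma det_thankel_pd2 k : \det (thankel_pd2 k) = 'X ^+ k.
Proof.
elim/ltn_ind: k => -[|k'] IH; first by rewrite det_mx00.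
set k := k'.+1; set m := trunc_log 2 k.
have le_k : (2 ^ m <= k)%N := trunc_logP (isT : (1 < 2)%N) (ltn0Sn _).
have lt_k : (k < 2 ^ m.+1)%N := trunc_log_ltn _ (isT : (1 < 2)%N).
have [ek | ne_k] := eqVneq k (2 ^ m)%N; first exact: det_thankel_pd2_pow2 ek.
set r := (2 ^ m.+1 - k)%N.
have ekr : (k + r = 2 ^ m.+1)%N by lia.
have lt_r : (r < k)%N.
  by move: le_k lt_k (ekr); rewrite leq_eqVlt eq_sym (negbTE ne_k) expnS /=; lia.
have := det_mul_drsubmx (thankel_pd2_sqr ekr).
rewrite ulsubmx_thankel_pd2 (det_drsubmx_thankel_pd2 ekr) (IH _ lt_r).
rewrite (det_thankel_pd2_pow2 ekr) => hdet.
apply: (@mulIf _ (('X ^+ 2) ^+ r)); first by rewrite !expf_neq0 // polyX_eq0.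
by rewrite -hdet -!exprM -!exprD; congr (_ ^+ _); lia.
Qed.

Lemma tHankel_pd_char_poly k :
  tHankel pd k = char_poly (\matrix_(i < k, j < k) if i == j then 0 else - pd (i + j)).
Proof.
rewrite /tHankel /char_poly; congr (\det _); apply/matrixP => i j; rewrite !mxE.
case: eqP => [->|_]; last by rewrite mulr0n sub0r polyCN opprK.
by rewrite addnn -mul2n pd_even mul1r mulr1n subr0.
Qed.

Lemma map_tHankel_pd k : map_poly (intr : int -> 'F_2) (tHankel pd k) = 'X ^+ k.
Proof.
rewrite /tHankel -det_map_mx -det_thankel_pd2; congr (\det _).
apply/matrixP => i j; rewrite !mxE; case: eqP => [->|_].
  by rewrite rmorphM /= map_polyC map_polyX addnn -mul2n pd_even /= rmorph1 mul1r.
by rewrite /= map_polyC.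
Qed.

Theorem theorem1p2 (k : nat) : (0 < k)%N ->
  size (tHankel pd k) = k.+1 /\ poly_congr 2 (tHankel pd k) ('X^k).
Proof.
move=> _; split; first by rewrite tHankel_pd_char_poly size_char_poly.
move=> i; rewrite (dvdz_pcharf pchar_F2) coefB intrB.
by rewrite -!(coef_map (intr : int -> 'F_2)) map_tHankel_pd map_polyXn subrr.
Qed.
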